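(* Let $\alpha,\beta\in(0,1)$ with $\alpha\ne\beta$, and set $x=[\alpha N]$, $y=[\beta N]$. (i) For the symmetric walk and for the weakly asymmetric walk (any fixed $c>0$), $$\lim_{N\to\infty}P_x\big(G(y)\equiv1\ (\mathrm{mod}\ 2)\,\big|\,T_y<T_N<T_0\big)=\lim_{N\to\infty}P_x\big(G(y)\equiv1\ (\mathrm{mod}\ 2)\,\big|\,T_y<T_0<T_N\big)=\frac12,$$ and consequently $\lim_{N\to\infty}P_x\big(G(y)\equiv1\ (\mathrm{mod}\ 2)\,\big|\,T_y<\tau_N\big)=\frac12$. (ii) For the asymmetric walk with fixed $q<p$ and $\alpha<\beta$, $$\lim_{N\to\infty}P_x\big(G(y)\equiv1\ (\mathrm{mod}\ 2)\big)=\frac{1}{2-(p-q)}.$$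
   Context: Let $\mathcal T_N=\{0,\dots,N\}$ and let $(X_n)$ be a nearest-neighbour random walk on $\mathcal T_N$ stepping right with probability $p_N$ and left with probability $q_N=1-p_N$, independently, stopped the first time it is at $0$ or $N$. $P_x$ denotes the law with $X_0=x$. The walk is called: - symmetric if $p_N=q_N=1/2$; - weakly asymmetric (fixed $c>0$) if $q_N=1/2-c/N$ and $p_N=1/2+c/N$; - asymmetric if $p_N=p$ and $q_N=q$ are fixed with $p+q=1$ and $q<p$. $T_a=\inf\{n\ge1:X_n=a\}$, $\tau_N=T_0\wedge T_N$, and $G(y)=\sum_{k=0}^{\tau_N}\mathbf 1\{X_k=y\}$ is the number of visits to $y$ before exit. $[\cdot]$ is the integer part. *)

From Stdlib Require Import Reals List Arith Bool Lia ClassicalEpsilon.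
Import ListNotations.
Open Scope R_scope.

(* All coin sequences of length n (true = step right, false = step left). *)
Fixpoint bool_lists (n : nat) : list (list bool) :=
  match n with
  | O => [nil]
  | S n => flat_map (fun s => [true :: s; false :: s]) (bool_lists n)
  end.

Definition weight (p : R) (s : list bool) : R :=
  fold_right (fun (b : bool) (acc : R) => (if b then p else 1 - p) * acc) 1 s.

(* Trajectory X_0, X_1, ... of the walk on {0..N} started at x driven by the
   coins s, truncated at the exit time tau_N (the walk is stopped on {0,N}),
   or at the end of s if exit has not happened yet. *)
Fixpoint run (N x : nat) (s : list bool) : list nat :=
  match s with
  | nil => [x]
  | b :: s' =>
      if (x =? 0)%nat || (x =? N)%nat then [x]
      else x :: run N (if b then S x else Nat.pred x) s'
  end.

Definition absorbed (N : nat) (path : list nat) : bool :=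
  let z := last path 0%nat in ((z =? 0)%nat || (z =? N)%nat).

(* P_x(tau_N <= n and A), A an event on the (stopped) trajectory up to tau_N. *)
Definition Qn (p : R) (N x : nat) (A : list nat -> bool) (n : nat) : R :=
  fold_right Rplus 0
    (map (fun s => if absorbed N (run N x s) && A (run N x s)
                   then weight p s else 0) (bool_lists n)).

(* P_x(A) = lim_n P_x(tau_N <= n, A)   (tau_N < infinity a.s.). *)
Definition Prob (p : R) (N x : nat) (A : list nat -> bool) : R :=
  epsilon (inhabits 0) (fun l => Un_cv (Qn p N x A) l).

Definition CProb (p : R) (N x : nat) (A B : list nat -> bool) : R :=
  Prob p N x (fun w => A w && B w) / Prob p N x B.

(* Hitting time T_a = inf{n >= 1 : X_n = a}; None = +infinity.
   On the stopped trajectory [X_0; ...; X_tau] this is the first index >= 1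
   where a occurs (after tau the walk stays at X_tau). *)
Fixpoint find_idx (a : nat) (l : list nat) (i : nat) : option nat :=
  match l with
  | nil => None
  | h :: t => if (h =? a)%nat then Some i else find_idx a t (S i)
  end.

Definition T (a : nat) (path : list nat) : option nat :=
  match path with nil => None | _ :: t => find_idx a t 1 end.

Definition ltT (u v : option nat) : bool :=
  match u, v with
  | Some i, Some j => (i <? j)%nat
  | Some _, None => true
  | None, _ => false
  end.

Definition G (y : nat) (path : list nat) : nat := count_occ Nat.eq_dec path y.

Definition ipart (r : R) : nat := Z.to_nat (Int_part r).

(* minimum in nat ∪ {+infinity}; tau_N = minT (T 0) (T N) *)
Definition minT (u v : option nat) : option nat :=
  match u, v with
  | Some i, Some j => Some (Nat.min i j)
  | Some i, None => Some i
  | None, v => v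
  end.

(* Write r = q/p.  An event that ignores the path before the first visit to y has a
   probability that is harmonic on [0,y] and on [y,N]; by gambler's ruin (scale function
   sum_(k<m) r^k) its value at x is the probability of hitting y times its value at y.
   At y, a step followed by a return to y flips the parity of G(y): with rho the
   probability of returning to y before exit, P_y(G(y) even > 0) = rho P_y(G(y) odd)
   and P_y(G(y) odd) = rho P_y(G(y) even > 0) + P_y(no return), so the conditional law of
   the parity given a visit to y has odd weight 1/(1+rho).  In the (weakly) symmetric case
   1 - rho = O(1/N) and the limit is 1/2.  In the asymmetric case rho -> p r + q = 2q and
   the walk started below y hits y with probability tending to 1, giving 1/(1+2q). *)

From Stdlib Require Import Reals List Bool ZArith Lia Lra ClassicalEpsilon.
Import ListNotations.
Open Scope R_scope.

(** * Absorption probabilities *)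

Definition lsum (f : list bool -> R) (l : list (list bool)) : R :=
  fold_right Rplus 0 (map f l).

Lemma lsum_ext f g l : (forall s, f s = g s) -> lsum f l = lsum g l.
Proof. intros H; unfold lsum; f_equal; apply map_ext, H. Qed.

Lemma lsum_add f g l : lsum (fun s => f s + g s) l = lsum f l + lsum g l.
Proof. unfold lsum; induction l as [|s l IH]; simpl; rewrite ?IH; ring. Qed.

Lemma lsum_scal a f l : lsum (fun s => a * f s) l = a * lsum f l.
Proof. unfold lsum; induction l as [|s l IH]; simpl; rewrite ?IH; ring. Qed.

Lemma lsum_0 l : lsum (fun _ => 0) l = 0.
Proof. unfold lsum; induction l as [|s l IH]; simpl; rewrite ?IH; ring. Qed.

Lemma lsum_bool_lists_S f n :
  lsum f (bool_lists (S n)) = lsum (fun s => f (true :: s) + f (false :: s)) (bool_lists n).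
Proof.
  unfold lsum; simpl; induction (bool_lists n) as [|s l IH]; simpl; rewrite ?IH; ring.
Qed.

Lemma lsum_weight p n : lsum (weight p) (bool_lists n) = 1.
Proof.
  induction n as [|n IH]; [unfold lsum; simpl; ring|].
  rewrite lsum_bool_lists_S, <- IH; apply lsum_ext; intros s; simpl; ring.
Qed.

Definition at_boundary (N z : nat) : bool := (z =? 0)%nat || (z =? N)%nat.

Lemma at_boundary_false N z : (0 < z < N)%nat -> at_boundary N z = false.
Proof. intros Hz; unfold at_boundary; apply orb_false_iff; split; apply Nat.eqb_neq; lia. Qed.

Lemma run_boundary N z s : at_boundary N z = true -> run N z s = [z].
Proof. intros H; destruct s; simpl; [|unfold at_boundary in H; rewrite H]; reflexivity. Qed.

Lemma run_interior N z b s : at_boundary N z = false ->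
  run N z (b :: s) = z :: run N (if b then S z else Nat.pred z) s.
Proof. intros H; unfold at_boundary in H; simpl; rewrite H; reflexivity. Qed.

Lemma run_starts_at N z s : exists w, run N z s = z :: w.
Proof.
  destruct s as [|b s]; [now exists nil|].
  destruct (at_boundary N z) eqn:Hz.
  - exists nil; apply run_boundary, Hz.
  - eexists; apply run_interior, Hz.
Qed.

Lemma run_nonnil N z s : run N z s <> nil.
Proof. destruct (run_starts_at N z s) as [w ->]; discriminate. Qed.

Lemma last_cons_nonnil (z : nat) w d : w <> nil -> last (z :: w) d = last w d.
Proof. destruct w; [congruence|reflexivity]. Qed.

Definition Qterm (p : R) (N x : nat) (A : list nat -> bool) (s : list bool) : R :=
  if absorbed N (run N x s) && A (run N x s) then weight p s else 0.

Lemma Qn_lsum p N x A n : Qn p N x A n = lsum (Qterm p N x A) (bool_lists n).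
Proof. reflexivity. Qed.

Lemma Un_cv_const (c : R) : Un_cv (fun _ => c) c.
Proof. intros eps He; exists O; intros; unfold Rdist; rewrite Rminus_diag, Rabs_R0; lra. Qed.

Section Absorption.

Variables (p : R) (N : nat).
Hypothesis p_prob : 0 <= p <= 1.

Lemma Qn_boundary z A n : at_boundary N z = true ->
  Qn p N z A n = if A [z] then 1 else 0.
Proof.
  intros Hz; rewrite Qn_lsum.
  rewrite (lsum_ext _ (fun s => if A [z] then weight p s else 0)).
  - destruct (A [z]); [apply lsum_weight|apply lsum_0].
  - intros s; unfold Qterm, absorbed; rewrite run_boundary by exact Hz.
    simpl; unfold at_boundary in Hz; rewrite Hz; reflexivity.
Qed.

Lemma Qn_interior_0 z A : at_boundary N z = false -> Qn p N z A 0 = 0.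
Proof.
  intros Hz; unfold Qn, absorbed; simpl; unfold at_boundary in Hz; rewrite Hz; simpl; ring.
Qed.

Lemma Qn_step z A n : at_boundary N z = false ->
  Qn p N z A (S n) = p * Qn p N (S z) (fun w => A (z :: w)) n
                     + (1 - p) * Qn p N (Nat.pred z) (fun w => A (z :: w)) n.
Proof.
  intros Hz; rewrite !Qn_lsum, lsum_bool_lists_S, <- !lsum_scal, <- lsum_add.
  apply lsum_ext; intros s; unfold Qterm, absorbed.
  rewrite !run_interior by exact Hz; rewrite !last_cons_nonnil by apply run_nonnil.
  simpl; destruct (_ && A (z :: run N (S z) s)), (_ && A (z :: run N (Nat.pred z) s)); ring.
Qed.

Lemma Qn_bounds n : forall z A, 0 <= Qn p N z A n <= 1.
Proof.
  induction n as [|n IH]; intros z A; destruct (at_boundary N z) eqn:Hz;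
    try (rewrite Qn_boundary by exact Hz; destruct (A [z]); lra).
  - rewrite Qn_interior_0 by exact Hz; lra.
  - rewrite Qn_step by exact Hz.
    destruct (IH (S z) (fun w => A (z :: w))), (IH (Nat.pred z) (fun w => A (z :: w))); nra.
Qed.

Lemma Qn_le_succ n : forall z A, Qn p N z A n <= Qn p N z A (S n).
Proof.
  induction n as [|n IH]; intros z A; destruct (at_boundary N z) eqn:Hz;
    try (rewrite !Qn_boundary by exact Hz; lra).
  - rewrite Qn_interior_0 by exact Hz; apply Qn_bounds.
  - rewrite (Qn_step _ _ (S n)), Qn_step by exact Hz.
    pose proof (IH (S z) (fun w => A (z :: w))).
    pose proof (IH (Nat.pred z) (fun w => A (z :: w))); nra.
Qed.

Lemma Prob_spec z A : Un_cv (Qn p N z A) (Prob p N z A).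
Proof.
  unfold Prob; apply epsilon_spec.
  destruct (growing_cv (Qn p N z A)) as [l Hl]; [intros n; apply Qn_le_succ| |now exists l].
  exists 1; intros u [n ->]; apply Qn_bounds.
Qed.

Lemma Prob_unique z A l : Un_cv (Qn p N z A) l -> Prob p N z A = l.
Proof. intros H; eapply UL_sequence; [apply Prob_spec|exact H]. Qed.

Lemma Prob_boundary z A : at_boundary N z = true -> Prob p N z A = if A [z] then 1 else 0.
Proof.
  intros Hz; apply Prob_unique; eapply Un_cv_ext; [|apply Un_cv_const].
  intros n; symmetry; apply Qn_boundary, Hz.
Qed.

Lemma Prob_ext z A B :
  (forall s, absorbed N (run N z s) = true -> A (run N z s) = B (run N z s)) ->
  Prob p N z A = Prob p N z B.
Proof.
  intros H; apply Prob_unique; eapply Un_cv_ext; [|apply Prob_spec].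
  intros n; rewrite !Qn_lsum; apply lsum_ext; intros s; unfold Qterm.
  destruct (absorbed N (run N z s)) eqn:E; [rewrite H by exact E|]; reflexivity.
Qed.

Lemma Prob_step z A B : at_boundary N z = false ->
  (forall w, w <> nil -> A (z :: w) = B w) ->
  Prob p N z A = p * Prob p N (S z) B + (1 - p) * Prob p N (Nat.pred z) B.
Proof.
  intros Hz HAB.
  rewrite (Prob_ext (S z) B (fun w => A (z :: w))), (Prob_ext (Nat.pred z) B (fun w => A (z :: w)))
    by (intros s _; symmetry; apply HAB, run_nonnil).
  apply Prob_unique; apply (CV_shift _ 1); eapply Un_cv_ext.
  - intros n; rewrite Nat.add_1_r; symmetry; apply Qn_step, Hz.
  - apply CV_plus; apply CV_mult; apply Un_cv_const || apply Prob_spec.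
Qed.

Lemma Prob_disjoint_union z A A1 A2 :
  (forall w, A w = A1 w || A2 w) -> (forall w, A1 w && A2 w = false) ->
  Prob p N z A = Prob p N z A1 + Prob p N z A2.
Proof.
  intros HA Hdisj; apply Prob_unique; eapply Un_cv_ext; [|apply CV_plus; apply Prob_spec].
  intros n; rewrite !Qn_lsum, <- lsum_add; apply lsum_ext; intros s; unfold Qterm.
  rewrite HA; specialize (Hdisj (run N z s)).
  destruct (absorbed _ _), (A1 _), (A2 _); simpl in *; try ring; discriminate.
Qed.

Lemma Prob_impossible z A : (forall s, A (run N z s) = false) -> Prob p N z A = 0.
Proof.
  intros H; apply Prob_unique; eapply Un_cv_ext; [|apply Un_cv_const].
  intros n; rewrite Qn_lsum, <- (lsum_0 (bool_lists n)); apply lsum_ext; intros s.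
  unfold Qterm; rewrite H, andb_false_r; reflexivity.
Qed.

End Absorption.

(** * Gambler's ruin *)

Fixpoint geom_sum (r : R) (m : nat) : R :=
  match m with O => 0 | S m' => geom_sum r m' + r ^ m' end.

Lemma geom_sum_ge0 r m : 0 <= r -> 0 <= geom_sum r m.
Proof. intros Hr; induction m; simpl; [lra|]; pose proof (pow_le r m Hr); lra. Qed.

Lemma geom_sum_le r m n : 0 <= r -> (m <= n)%nat -> geom_sum r m <= geom_sum r n.
Proof. intros Hr H; induction H; simpl; [lra|]; pose proof (pow_le r m0 Hr); lra. Qed.

Lemma geom_sum_lt r m n : 0 < r -> (m < n)%nat -> geom_sum r m < geom_sum r n.
Proof.
  intros Hr H; induction H; simpl; pose proof (pow_lt r m Hr); [|pose proof (pow_lt r m0 Hr)]; lra.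
Qed.

Lemma geom_sum_ge1 r m : 0 <= r -> (1 <= m)%nat -> 1 <= geom_sum r m.
Proof. intros Hr Hm; pose proof (geom_sum_le r 1 m Hr Hm); simpl in *; lra. Qed.

Lemma geom_sum_closed_form r m : geom_sum r m * (1 - r) = 1 - r ^ m.
Proof. induction m; simpl; [ring|]; rewrite Rmult_plus_distr_r, IHm; ring. Qed.

Definition odds (p : R) : R := (1 - p) / p.

Lemma odds_ge0 p : 0 < p <= 1 -> 0 <= odds p.
Proof. intros; unfold odds; apply Rmult_le_pos; [lra|left; apply Rinv_0_lt_compat; lra]. Qed.

Lemma odds_gt0 p : 0 < p < 1 -> 0 < odds p.
Proof. intros; apply Rdiv_lt_0_compat; lra. Qed.

Definition harmonic (p : R) (h : nat -> R) (lo hi : nat) : Prop :=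
  forall z, (lo < z < hi)%nat -> h z = p * h (S z) + (1 - p) * h (Nat.pred z).

Section Harmonic.

Variable p : R.
Hypothesis p_pos : 0 < p <= 1.

(* The increments of [d] get multiplied by [odds p] at each step, so [d] is a multiple of the
   scale function [geom_sum (odds p)] that vanishes at [hi]. *)
Lemma harmonic_zero_ends d lo hi : harmonic p d lo hi -> (lo <= hi)%nat ->
  d lo = 0 -> d hi = 0 -> forall z, (lo <= z <= hi)%nat -> d z = 0.
Proof.
  intros Hd Hlh H0 H1.
  set (e k := d (lo + k)%nat).
  assert (He : forall k, (k + 1 < hi - lo)%nat ->
            p * (e (S (S k)) - e (S k)) = (1 - p) * (e (S k) - e k)).
  { intros k Hk; unfold e; rewrite (Hd (lo + S k)%nat) by lia.
    replace (S (lo + S k)) with (lo + S (S k))%nat by lia;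
    replace (Nat.pred (lo + S k)) with (lo + k)%nat by lia; ring. }
  assert (Hinc : forall k, (k < hi - lo)%nat -> e (S k) - e k = odds p ^ k * e 1%nat).
  { induction k as [|k IH]; intros Hk; [unfold e; rewrite Nat.add_0_r, H0; simpl; ring|].
    apply (Rmult_eq_reg_l p); [|lra]; rewrite He, IH by lia; unfold odds; simpl; field; lra. }
  assert (Hval : forall k, (k <= hi - lo)%nat -> e k = e 1%nat * geom_sum (odds p) k).
  { induction k as [|k IH]; intros Hk; [unfold e; rewrite Nat.add_0_r, H0; simpl; ring|].
    simpl; pose proof (Hinc k ltac:(lia)); rewrite IH in * by lia; lra. }
  intros z Hz; replace z with (lo + (z - lo))%nat by lia; fold (e (z - lo)%nat).
  destruct (Nat.eq_dec lo hi) as [->|Hne].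
  { replace (z - hi)%nat with O by lia; unfold e; rewrite Nat.add_0_r; exact H0. }
  assert (E1 : e 1%nat = 0).
  { pose proof (Hval (hi - lo)%nat (le_n _)) as E; unfold e at 1 in E.
    replace (lo + (hi - lo))%nat with hi in E by lia; rewrite H1 in E.
    pose proof (geom_sum_ge1 (odds p) (hi - lo) (odds_ge0 p p_pos) ltac:(lia)).
    symmetry in E; apply Rmult_integral in E; lra. }
  rewrite Hval, E1 by lia; ring.
Qed.

Lemma harmonic_geom_sum a b lo hi :
  harmonic p (fun z => a + b * geom_sum (odds p) (z - lo)) lo hi.
Proof.
  intros z Hz.
  replace (S z - lo)%nat with (S (z - lo)) by lia.
  replace (Nat.pred z - lo)%nat with (Nat.pred (z - lo)) by lia.
  destruct (z - lo)%nat as [|m] eqn:E; [lia|]; unfold odds; simpl; field; lra.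
Qed.

Lemma harmonic_interpolation h lo hi : (lo < hi)%nat -> harmonic p h lo hi ->
  forall z, (lo <= z <= hi)%nat ->
  h z = h lo + (h hi - h lo) * (geom_sum (odds p) (z - lo) / geom_sum (odds p) (hi - lo)).
Proof.
  intros Hlh Hh.
  set (S := geom_sum (odds p) (hi - lo)).
  assert (HS : 1 <= S) by (apply geom_sum_ge1; [apply odds_ge0|lia]; auto).
  set (g z := h lo + (h hi - h lo) / S * geom_sum (odds p) (z - lo)).
  assert (Hdiff : forall z, (lo <= z <= hi)%nat -> h z - g z = 0).
  { apply (harmonic_zero_ends (fun z => h z - g z)); [|lia| |].
    - intros z Hz; pose proof (harmonic_geom_sum (h lo) ((h hi - h lo) / S) lo hi z Hz).
      rewrite (Hh z Hz); unfold g in *; lra.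
    - unfold g; rewrite Nat.sub_diag; simpl; ring.
    - unfold g; fold S; field; lra. }
  intros z Hz; specialize (Hdiff z Hz); unfold g in Hdiff; unfold Rdiv in *; lra.
Qed.

End Harmonic.

(* [P_z](the walk visits [y] before exiting), via the scale function [geom_sum (odds p)]. *)
Definition hit_prob (p : R) (N y z : nat) : R :=
  if (z <? y)%nat then geom_sum (odds p) z / geom_sum (odds p) y
  else 1 - geom_sum (odds p) (z - y) / geom_sum (odds p) (N - y).

Lemma harmonic_off_point p N y h : 0 < p <= 1 -> (0 < y < N)%nat ->
  harmonic p h 0 y -> harmonic p h y N -> forall z, (z <= N)%nat ->
  h z = hit_prob p N y z * h y + (1 - hit_prob p N y z) * h (if (z <? y)%nat then O else N).
Proof.
  intros Hp Hy Hlow Hhigh z Hz; unfold hit_prob.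
  destruct (Nat.ltb_spec z y) as [Hzy|Hzy].
  - rewrite (harmonic_interpolation p Hp h 0 y ltac:(lia) Hlow z) by lia.
    rewrite !Nat.sub_0_r; ring.
  - rewrite (harmonic_interpolation p Hp h y N ltac:(lia) Hhigh z) by lia; ring.
Qed.

Section HittingProbability.

Variables (p : R) (N y : nat).
Hypotheses (p_pos : 0 < p <= 1) (y_interior : (0 < y < N)%nat).

Let r := odds p.

Lemma hit_prob_below z : (z < y)%nat -> hit_prob p N y z = geom_sum r z / geom_sum r y.
Proof. intros Hz; unfold hit_prob; apply Nat.ltb_lt in Hz; rewrite Hz; reflexivity. Qed.

Lemma hit_prob_succ : hit_prob p N y (S y) = 1 - 1 / geom_sum r (N - y).
Proof.
  unfold hit_prob; rewrite (proj2 (Nat.ltb_ge _ _)) by lia.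
  replace (S y - y)%nat with 1%nat by lia; simpl; rewrite Rplus_0_l; reflexivity.
Qed.

Lemma hit_prob_pred : hit_prob p N y (Nat.pred y) = geom_sum r (Nat.pred y) / geom_sum r y.
Proof. apply hit_prob_below; lia. Qed.

Lemma one_sub_hit_prob_pred : 1 - hit_prob p N y (Nat.pred y) = r ^ Nat.pred y / geom_sum r y.
Proof.
  rewrite hit_prob_pred; pose proof (geom_sum_ge1 r y (odds_ge0 p p_pos) ltac:(lia)).
  destruct y as [|y']; [lia|]; simpl Nat.pred; simpl geom_sum in *; field; lra.
Qed.

Lemma hit_prob_succ_bounds : 0 <= hit_prob p N y (S y) < 1.
Proof.
  rewrite hit_prob_succ; pose proof (geom_sum_ge1 r (N - y) (odds_ge0 p p_pos) ltac:(lia)).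
  assert (0 < 1 / geom_sum r (N - y) <= 1).
  { split; [apply Rdiv_lt_0_compat; lra|]; unfold Rdiv; rewrite Rmult_1_l, <- Rinv_1.
    apply Rinv_le_contravar; lra. }
  lra.
Qed.

Lemma hit_prob_pred_bounds : 0 <= hit_prob p N y (Nat.pred y) <= 1.
Proof.
  rewrite hit_prob_pred; pose proof (odds_ge0 p p_pos).
  pose proof (geom_sum_ge1 r y ltac:(assumption) ltac:(lia)).
  pose proof (geom_sum_ge0 r (Nat.pred y) ltac:(assumption)).
  pose proof (geom_sum_le r (Nat.pred y) y ltac:(assumption) ltac:(lia)).
  split; [apply Rmult_le_pos; [lra|left; apply Rinv_0_lt_compat; lra]|].
  apply (Rmult_le_reg_r (geom_sum r y)); [lra|]; unfold Rdiv; rewrite Rmult_assoc, Rinv_l; lra.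
Qed.

Lemma hit_prob_gt0 z : p < 1 -> (0 < z < N)%nat -> 0 < hit_prob p N y z.
Proof.
  intros Hp1 Hz; pose proof (odds_gt0 p ltac:(lra)) as Hr; fold r in Hr.
  unfold hit_prob; fold r; destruct (Nat.ltb_spec z y).
  - apply Rdiv_lt_0_compat; apply (Rlt_le_trans _ 1); try lra; apply geom_sum_ge1; lra || lia.
  - pose proof (geom_sum_lt r (z - y) (N - y) Hr ltac:(lia)).
    pose proof (geom_sum_ge0 r (z - y) ltac:(lra)).
    assert (geom_sum r (z - y) / geom_sum r (N - y) < 1); [|lra].
    apply (Rmult_lt_reg_r (geom_sum r (N - y))); [lra|].
    unfold Rdiv; rewrite Rmult_assoc, Rinv_l; lra.
Qed.

End HittingProbability.

(** * Parity of the number of visits *)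

Definition return_prob (p : R) (N y : nat) : R :=
  p * hit_prob p N y (S y) + (1 - p) * hit_prob p N y (Nat.pred y).

Definition indicator (b : bool) : R := if b then 1 else 0.

(* [P_y](no return to [y] and the exit point satisfies [f]). *)
Definition escape_prob (p : R) (N y : nat) (f : nat -> bool) : R :=
  p * indicator (f N) * (1 - hit_prob p N y (S y))
  + (1 - p) * indicator (f O) * (1 - hit_prob p N y (Nat.pred y)).

Lemma return_prob_bounds p N y : 0 < p <= 1 -> (0 < y < N)%nat -> 0 <= return_prob p N y < 1.
Proof.
  intros Hp Hy; unfold return_prob.
  pose proof (hit_prob_succ_bounds p N y Hp Hy); pose proof (hit_prob_pred_bounds p N y Hp Hy); nra.
Qed.

Definition invariant_off (y : nat) (A : list nat -> bool) : Prop :=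
  forall z w, z <> y -> w <> nil -> A (z :: w) = A w.

(* Until the walk visits [y] such an event ignores the path, so its probability is harmonic
   on both sides of [y]. *)
Lemma Prob_first_visit p N y A z : 0 < p <= 1 -> (0 < y < N)%nat -> invariant_off y A ->
  (z <= N)%nat ->
  Prob p N z A = hit_prob p N y z * Prob p N y A
                 + (1 - hit_prob p N y z) * Prob p N (if (z <? y)%nat then O else N) A.
Proof.
  intros Hp Hy HA Hz.
  assert (Hharm : forall lo hi, (lo = 0 /\ hi = y \/ lo = y /\ hi = N)%nat ->
            harmonic p (fun z => Prob p N z A) lo hi).
  { intros lo hi Hlh u Hu; apply Prob_step; [lra|apply at_boundary_false; lia|].
    intros w Hw; apply HA; [lia|exact Hw]. }
  exact (harmonic_off_point p N y (fun z => Prob p N z A) Hp Hy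
           (Hharm 0%nat y ltac:(lia)) (Hharm y N ltac:(lia)) z Hz).
Qed.

Definition visit_event (y : nat) (c f : nat -> bool) (w : list nat) : bool :=
  c (G y w) && f (last w O).

Lemma visit_event_invariant_off y c f : invariant_off y (visit_event y c f).
Proof.
  intros z w Hz Hw; unfold visit_event, G.
  rewrite count_occ_cons_neq, last_cons_nonnil by assumption; reflexivity.
Qed.

Lemma visit_event_cons y c f w : w <> nil ->
  visit_event y c f (y :: w) = visit_event y (fun n => c (S n)) f w.
Proof.
  intros Hw; unfold visit_event, G.
  rewrite count_occ_cons_eq, last_cons_nonnil by trivial; reflexivity.
Qed.

Lemma Prob_visit_event_boundary p N y c f b : 0 <= p <= 1 -> (b = 0 \/ b = N)%nat -> b <> y ->
  Prob p N b (visit_event y c f) = indicator (c O && f b).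
Proof.
  intros Hp Hb Hby; rewrite Prob_boundary by (assumption || (unfold at_boundary;
    apply orb_true_iff; destruct Hb; [left|right]; apply Nat.eqb_eq; assumption)).
  unfold visit_event, G; rewrite count_occ_cons_neq by assumption; reflexivity.
Qed.

Section Renewal.

Variables (p : R) (N y : nat) (f : nat -> bool).
Hypotheses (p_pos : 0 < p <= 1) (y_interior : (0 < y < N)%nat).

Let odd_visits := visit_event y Nat.odd f.
Let even_visits := visit_event y (fun n => Nat.even n && (0 <? n)%nat) f.
Let no_visit := visit_event y (fun n => n =? 0)%nat f.

Let p_prob : 0 <= p <= 1.
Proof. lra. Qed.

Lemma Prob_visit_event_decomp c z : (z <= N)%nat ->
  Prob p N z (visit_event y c f)
  = hit_prob p N y z * Prob p N y (visit_event y c f)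
    + (1 - hit_prob p N y z) * indicator (c O && f (if (z <? y)%nat then O else N)).
Proof.
  intros Hz; rewrite (Prob_first_visit p N y) by (apply visit_event_invariant_off || assumption).
  destruct (z <? y)%nat; [rewrite (Prob_visit_event_boundary _ _ _ _ _ O)
                         |rewrite (Prob_visit_event_boundary _ _ _ _ _ N)]; trivial; lia.
Qed.

Lemma Prob_visit_event_from c z : (z <= N)%nat -> c O = false ->
  Prob p N z (visit_event y c f) = hit_prob p N y z * Prob p N y (visit_event y c f).
Proof.
  intros Hz Hc; rewrite Prob_visit_event_decomp, Hc by exact Hz; unfold indicator; simpl; ring.
Qed.

(* Each return to [y] flips the parity of the number of visits. *)
Lemma even_visits_at_y :
  Prob p N y even_visits = return_prob p N y * Prob p N y odd_visits.
Proof.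
  rewrite (Prob_step p N p_prob y _ odd_visits).
  2: apply at_boundary_false; lia.
  2: intros w Hw; unfold even_visits; rewrite visit_event_cons by exact Hw;
     unfold odd_visits, visit_event; rewrite Nat.even_succ, andb_true_r; reflexivity.
  unfold odd_visits.
  rewrite (Prob_visit_event_from _ (S y)), (Prob_visit_event_from _ (Nat.pred y))
    by (reflexivity || lia).
  unfold return_prob; ring.
Qed.

Lemma odd_visits_at_y :
  Prob p N y odd_visits = return_prob p N y * Prob p N y even_visits + escape_prob p N y f.
Proof.
  assert (Hsplit : forall z, Prob p N z (fun w => even_visits w || no_visit w)
                             = Prob p N z even_visits + Prob p N z no_visit).
  { intros z; apply Prob_disjoint_union; [assumption|reflexivity|].
    intros w; unfold even_visits, no_visit, visit_event.
    destruct (G y w); simpl; [|rewrite ?andb_false_r]; reflexivity. }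
  assert (Hno : Prob p N y no_visit = 0).
  { apply Prob_impossible; [assumption|]; intros s; destruct (run_starts_at N y s) as [w ->].
    unfold no_visit, visit_event, G; rewrite count_occ_cons_eq; reflexivity. }
  rewrite (Prob_step p N p_prob y _ (fun w => even_visits w || no_visit w)).
  - rewrite !Hsplit; unfold even_visits, no_visit.
    rewrite !(Prob_visit_event_decomp _ (S y)), !(Prob_visit_event_decomp _ (Nat.pred y)) by lia.
    fold no_visit; rewrite Hno.
    rewrite (proj2 (Nat.ltb_ge (S y) y)), (proj2 (Nat.ltb_lt (Nat.pred y) y)) by lia.
    unfold return_prob, escape_prob, indicator; simpl.
    destruct (f N), (f O); ring.
  - apply at_boundary_false; lia.
  - intros w Hw; unfold odd_visits, even_visits, no_visit.
    rewrite visit_event_cons by exact Hw; unfold visit_event; rewrite Nat.odd_succ.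
    destruct (G y w); simpl; [|rewrite orb_false_r, andb_true_r]; reflexivity.
Qed.

Lemma odd_visits_at_y_closed :
  Prob p N y odd_visits * (1 - return_prob p N y ^ 2) = escape_prob p N y f.
Proof.
  pose proof odd_visits_at_y as HU; rewrite even_visits_at_y in HU.
  set (u := Prob p N y odd_visits) in *; set (rho := return_prob p N y) in *.
  transitivity (u - rho * (rho * u)); [ring|lra].
Qed.

Lemma CProb_odd_visits x E : p < 1 -> (0 < x < N)%nat ->
  (forall s, absorbed N (run N x s) = true ->
     E (run N x s) = (0 <? G y (run N x s))%nat && f (last (run N x s) O)) ->
  0 < escape_prob p N y f ->
  CProb p N x (fun w => Nat.odd (G y w)) E = 1 / (1 + return_prob p N y).
Proof.
  intros Hp1 Hx HE Hesc; unfold CProb.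
  rewrite (Prob_ext p N p_prob x _ odd_visits).
  2: { intros s Hs; rewrite HE by exact Hs; unfold odd_visits, visit_event.
       destruct (G y (run N x s)); reflexivity. }
  rewrite (Prob_ext p N p_prob x E (fun w => odd_visits w || even_visits w)).
  2: { intros s Hs; rewrite HE by exact Hs; unfold odd_visits, even_visits, visit_event.
       destruct (G y (run N x s)) as [|n]; [reflexivity|].
       rewrite Nat.odd_succ, Nat.even_succ, <- Nat.negb_odd.
       destruct (Nat.odd n), (f _); reflexivity. }
  rewrite (Prob_disjoint_union p N p_prob x (fun w => odd_visits w || even_visits w)
             odd_visits even_visits); [|reflexivity|].
  2: { intros w; unfold odd_visits, even_visits, visit_event; rewrite <- Nat.negb_odd.
       destruct (Nat.odd _), (0 <? _)%nat, (f _); reflexivity. }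
  unfold odd_visits, even_visits.
  rewrite !(Prob_visit_event_from _ x) by (reflexivity || lia).
  fold odd_visits even_visits; rewrite even_visits_at_y.
  pose proof odd_visits_at_y_closed as Hclosed.
  pose proof (return_prob_bounds p N y p_pos y_interior).
  pose proof (hit_prob_gt0 p N y p_pos y_interior x Hp1 Hx).
  assert (Prob p N y odd_visits <> 0) by (intros Z; rewrite Z in Hclosed; lra).
  field; split; [lra|].
  replace (_ + _) with (hit_prob p N y x * Prob p N y odd_visits * (1 + return_prob p N y)) by ring.
  repeat apply Rmult_integral_contrapositive_currified; lra.
Qed.

End Renewal.

Lemma Prob_odd_visits p N x y : 0 < p <= 1 -> (0 < y < N)%nat -> (x <= N)%nat ->
  Prob p N x (fun w => Nat.odd (G y w)) = hit_prob p N y x / (1 + return_prob p N y).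
Proof.
  intros Hp Hy Hx.
  rewrite (Prob_ext p N ltac:(lra) x _ (visit_event y Nat.odd (fun _ => true))).
  2: intros s _; unfold visit_event; rewrite andb_true_r; reflexivity.
  rewrite (Prob_visit_event_from p N y _ Hp Hy _ x) by (reflexivity || assumption).
  pose proof (odd_visits_at_y_closed p N y (fun _ => true) Hp Hy) as Hclosed.
  pose proof (return_prob_bounds p N y Hp Hy).
  assert (Hesc : escape_prob p N y (fun _ => true) = 1 - return_prob p N y)
    by (unfold escape_prob, return_prob, indicator; ring).
  rewrite Hesc in Hclosed.
  replace (Prob p N y _) with (1 / (1 + return_prob p N y)).
  - unfold Rdiv; ring.
  - apply (Rmult_eq_reg_r (1 - return_prob p N y ^ 2)); [rewrite Hclosed; field; lra|nra].
Qed.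

(** * Order of the hitting times *)

Fixpoint stays_inside (N : nat) (l : list nat) : Prop :=
  match l with
  | nil => False
  | z :: l' => match l' with nil => True | _ => (0 < z < N)%nat /\ stays_inside N l' end
  end.

Lemma run_stays_inside N z s : (z <= N)%nat -> stays_inside N (run N z s).
Proof.
  revert z; induction s as [|b s IH]; intros z Hz; [exact I|].
  destruct (at_boundary N z) eqn:Hb; [rewrite run_boundary by exact Hb; exact I|].
  rewrite run_interior by exact Hb; unfold at_boundary in Hb.
  apply orb_false_iff in Hb as [H0 HN]; apply Nat.eqb_neq in H0, HN.
  destruct (run_starts_at N (if b then S z else Nat.pred z) s) as [w Hw].
  pose proof (IH (if b then S z else Nat.pred z) ltac:(destruct b; lia)) as Hin.
  rewrite Hw in *; split; [lia|exact Hin].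
Qed.

Lemma find_idx_cons a h t i :
  find_idx a (h :: t) i = if (h =? a)%nat then Some i else find_idx a t (S i).
Proof. reflexivity. Qed.

Lemma find_idx_exit N l i : stays_inside N l -> (last l O = O \/ last l O = N)%nat ->
  find_idx (last l O) l i = Some (i + length l - 1)%nat.
Proof.
  revert i; induction l as [|z l IH]; intros i Hin He; [destruct Hin|].
  destruct l as [|z' l]; [cbn; rewrite Nat.eqb_refl; f_equal; lia|].
  change (last (z :: z' :: l) O) with (last (z' :: l) O) in *.
  destruct Hin as [Hz Hin]; rewrite find_idx_cons.
  replace (z =? last (z' :: l) O)%nat with false by (symmetry; apply Nat.eqb_neq; lia).
  rewrite IH by assumption; f_equal; cbn [length]; lia.
Qed.

Lemma find_idx_absent N c l i : stays_inside N l -> (c = O \/ c = N)%nat -> c <> last l O ->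
  find_idx c l i = None.
Proof.
  revert i; induction l as [|z l IH]; intros i Hin Hc Hne; [destruct Hin|].
  destruct l as [|z' l]; rewrite find_idx_cons.
  - replace (z =? c)%nat with false by (symmetry; apply Nat.eqb_neq; cbn in Hne; lia); reflexivity.
  - change (last (z :: z' :: l) O) with (last (z' :: l) O) in Hne.
    destruct Hin as [Hz Hin]; replace (z =? c)%nat with false by (symmetry; apply Nat.eqb_neq; lia).
    apply IH; assumption.
Qed.

Lemma find_idx_before_exit N a l i : stays_inside N l -> (last l O = O \/ last l O = N)%nat ->
  (0 < a < N)%nat ->
  ltT (find_idx a l i) (Some (i + length l - 1)%nat) = (0 <? count_occ Nat.eq_dec l a)%nat.
Proof.
  revert i; induction l as [|z l IH]; intros i Hin He Ha; [destruct Hin|].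
  destruct (Nat.eq_dec z a) as [<-|Hza].
  - rewrite count_occ_cons_eq, find_idx_cons, Nat.eqb_refl by reflexivity.
    destruct l as [|z' l]; [cbn in He; lia|]; apply Nat.ltb_lt; cbn [length]; lia.
  - rewrite count_occ_cons_neq, find_idx_cons by exact Hza.
    replace (z =? a)%nat with false by (symmetry; apply Nat.eqb_neq; exact Hza).
    destruct l as [|z' l]; [reflexivity|].
    change (last (z :: z' :: l) O) with (last (z' :: l) O) in He.
    destruct Hin as [Hz Hin]; rewrite <- (IH (S i) Hin He Ha); do 2 f_equal; cbn [length]; lia.
Qed.

(* On an absorbed path the exit time is the hitting time of its endpoint, and the other
   endpoint is never hit. *)
Lemma exit_order_events N x y s : (0 < x < N)%nat -> (0 < y < N)%nat -> x <> y ->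
  absorbed N (run N x s) = true ->
  let w := run N x s in
  ltT (T y w) (T N w) && ltT (T N w) (T O w) = (0 <? G y w)%nat && (last w O =? N)%nat /\
  ltT (T y w) (T O w) && ltT (T O w) (T N w) = (0 <? G y w)%nat && (last w O =? O)%nat /\
  ltT (T y w) (minT (T O w) (T N w)) = (0 <? G y w)%nat.
Proof.
  intros Hx Hy Hxy Habs w.
  pose proof (run_stays_inside N x s ltac:(lia)) as Hin.
  unfold absorbed in Habs; fold w in Hin, Habs.
  destruct (run_starts_at N x s) as [rest Hw]; fold w in Hw; rewrite Hw in *.
  destruct rest as [|z rest]; [simpl in Habs; apply orb_true_iff in Habs as [E|E];
    apply Nat.eqb_eq in E; lia|].
  destruct Hin as [_ Hin]; change (last (x :: z :: rest) O) with (last (z :: rest) O) in *.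
  set (l := z :: rest) in *.
  assert (He : (last l O = O \/ last l O = N)%nat)
    by (apply orb_true_iff in Habs as [E|E]; apply Nat.eqb_eq in E; auto).
  unfold T, G; rewrite count_occ_cons_neq by exact Hxy.
  rewrite <- (find_idx_before_exit N y l 1 Hin He Hy).
  pose proof (find_idx_exit N l 1 Hin He) as Hexit.
  destruct He as [He|He]; rewrite He in Hexit |- *; rewrite Hexit.
  - rewrite (find_idx_absent N N l 1 Hin) by lia.
    replace (O =? N)%nat with false by (symmetry; apply Nat.eqb_neq; lia).
    destruct (find_idx y l 1); cbn; rewrite ?andb_false_r, ?andb_true_r; auto.
  - rewrite (find_idx_absent N O l 1 Hin) by lia.
    replace (N =? O)%nat with false by (symmetry; apply Nat.eqb_neq; lia).
    rewrite Nat.eqb_refl; destruct (find_idx y l 1); cbn; rewrite ?andb_false_r, ?andb_true_r; auto.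
Qed.

(** * Limits *)

Definition eventually (P : nat -> Prop) : Prop := exists N0, forall N, (N0 <= N)%nat -> P N.

Lemma eventually_and P Q : eventually P -> eventually Q -> eventually (fun N => P N /\ Q N).
Proof.
  intros [N0 HP] [N1 HQ]; exists (max N0 N1); intros N HN; split; [apply HP|apply HQ]; lia.
Qed.

Lemma eventually_mono (P Q : nat -> Prop) : (forall N, P N -> Q N) -> eventually P -> eventually Q.
Proof. intros H [N0 HP]; exists N0; auto. Qed.

Lemma eventually_scaled_gt (gam M : R) : 0 < gam -> eventually (fun N => M < gam * INR N).
Proof.
  intros Hg; destruct (INR_unbounded (M / gam)) as [N0 H0]; exists N0; intros N HN.
  apply le_INR in HN; apply (Rmult_lt_reg_l (/ gam)); [apply Rinv_0_lt_compat; lra|].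
  rewrite <- Rmult_assoc, Rinv_l, Rmult_1_l by lra; unfold Rdiv in H0; lra.
Qed.

Lemma Un_cv_eventually_ext (u v : nat -> R) l :
  eventually (fun N => u N = v N) -> Un_cv v l -> Un_cv u l.
Proof.
  intros [N0 H] Hv eps He; destruct (Hv eps He) as [N1 H1]; exists (max N0 N1).
  intros n Hn; rewrite H by lia; apply H1; lia.
Qed.

Lemma Un_cv_dominated (u b : nat -> R) l :
  eventually (fun N => Rabs (u N - l) <= b N) -> Un_cv b 0 -> Un_cv u l.
Proof.
  intros [N0 H] Hb eps He; destruct (Hb eps He) as [N1 H1]; exists (max N0 N1).
  intros n Hn; specialize (H1 n ltac:(lia)); unfold Rdist in *; rewrite Rminus_0_r in H1.
  pose proof (H n ltac:(lia)); pose proof (Rle_abs (b n)); lra.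
Qed.

Lemma Un_cv_inv (u : nat -> R) l : Un_cv u l -> l <> 0 -> Un_cv (fun n => / u n) (/ l).
Proof.
  intros Hu Hl; refine (continuity_seq (/ id)%F _ _ _ Hu).
  apply continuity_pt_inv; [apply derivable_continuous_pt, derivable_pt_id|exact Hl].
Qed.

Definition diverges (g : nat -> nat) : Prop := forall M, eventually (fun N => (M <= g N)%nat).

Lemma Un_cv_comp_diverges (h : nat -> R) g l :
  diverges g -> Un_cv h l -> Un_cv (fun N => h (g N)) l.
Proof.
  intros Hg Hh eps He; destruct (Hh eps He) as [M HM]; destruct (Hg M) as [N0 H0].
  exists N0; intros n Hn; apply HM, H0, Hn.
Qed.

Lemma diverges_pred g : diverges g -> diverges (fun N => Nat.pred (g N)).
Proof. intros H M; eapply eventually_mono; [|exact (H (S M))]; cbv beta; intros N HN; lia. Qed.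

Lemma inv_INR_diverges_cv0 g : diverges g -> Un_cv (fun N => / INR (g N)) 0.
Proof.
  intros Hg; apply (cv_infty_cv_0 (fun N => INR (g N))); intros M.
  destruct (INR_unbounded M) as [m Hm]; destruct (Hg m) as [N0 H0]; exists N0.
  intros N HN; pose proof (le_INR _ _ (H0 N HN)); lra.
Qed.

Lemma ipart_spec r : 0 <= r -> r - 1 < INR (ipart r) <= r.
Proof.
  intros Hr; unfold ipart; destruct (base_Int_part r) as [H1 H2].
  assert (Hz : (0 <= Int_part r)%Z).
  { assert (H : IZR (-1) < IZR (Int_part r)) by lra; apply lt_IZR in H; lia. }
  rewrite INR_IZR_INZ, Z2Nat.id by exact Hz; lra.
Qed.

Section ScaledIntegerPart.

Variable gam : R.
Hypothesis gam_unit : 0 < gam < 1.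

Let g N := ipart (gam * INR N).

Lemma ipart_scaled_spec N : gam * INR N - 1 < INR (g N) <= gam * INR N.
Proof. apply ipart_spec; pose proof (pos_INR N); nra. Qed.

Lemma ipart_scaled_diverges : diverges g.
Proof.
  intros M; eapply eventually_mono; [|exact (eventually_scaled_gt gam (INR M + 1) ltac:(lra))].
  cbv beta; intros N HN; apply INR_le; pose proof (ipart_scaled_spec N); lra.
Qed.

Lemma ipart_scaled_compl_diverges : diverges (fun N => N - g N)%nat.
Proof.
  intros M; eapply eventually_mono;
    [|exact (eventually_scaled_gt (1 - gam) (INR M + 1) ltac:(lra))].
  cbv beta; intros N HN; pose proof (ipart_scaled_spec N); pose proof (pos_INR N).
  assert (Hle : (g N <= N)%nat) by (apply INR_le; nra).
  apply INR_le; rewrite minus_INR by exact Hle; lra.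
Qed.

Lemma ipart_scaled_interior : eventually (fun N => (0 < g N < N)%nat).
Proof.
  eapply eventually_mono; [|exact (eventually_and _ _ (ipart_scaled_diverges 1%nat)
                                                  (ipart_scaled_compl_diverges 1%nat))].
  cbv beta; intros N HN; lia.
Qed.

End ScaledIntegerPart.

Lemma ipart_scaled_lt alpha beta : 0 < alpha < 1 -> 0 < beta < 1 -> alpha < beta ->
  eventually (fun N => (ipart (alpha * INR N) < ipart (beta * INR N))%nat).
Proof.
  intros Ha Hb Hab; eapply eventually_mono;
    [|exact (eventually_scaled_gt (beta - alpha) 1 ltac:(lra))].
  cbv beta; intros N HN.
  pose proof (ipart_scaled_spec alpha Ha N); pose proof (ipart_scaled_spec beta Hb N).
  apply INR_lt; lra.
Qed.

Lemma ipart_scaled_neq alpha beta : 0 < alpha < 1 -> 0 < beta < 1 -> alpha <> beta ->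
  eventually (fun N => ipart (alpha * INR N) <> ipart (beta * INR N)).
Proof.
  intros Ha Hb Hab; destruct (Rlt_or_le alpha beta) as [H|H].
  - eapply eventually_mono; [|exact (ipart_scaled_lt alpha beta Ha Hb H)].
    cbv beta; intros N HN; lia.
  - eapply eventually_mono; [|exact (ipart_scaled_lt beta alpha Hb Ha ltac:(lra))].
    cbv beta; intros N HN; lia.
Qed.

Lemma geom_sum_cv r : 0 <= r < 1 -> Un_cv (geom_sum r) (/ (1 - r)).
Proof.
  intros Hr.
  assert (H : Un_cv (fun m => (1 - r ^ m) * / (1 - r)) ((1 - 0) * / (1 - r))).
  { apply CV_mult; [apply CV_minus; [apply Un_cv_const|]|apply Un_cv_const].
    intros eps He; destruct (pow_lt_1_zero r ltac:(rewrite Rabs_right; lra) eps He) as [N0 H0].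
    exists N0; intros n Hn; unfold Rdist; rewrite Rminus_0_r; apply H0; lia. }
  rewrite Rminus_0_r, Rmult_1_l in H; eapply Un_cv_ext; [|exact H]; intros m; cbv beta.
  rewrite <- geom_sum_closed_form; field; lra.
Qed.

Section GeomSumLimits.

Variable r : R.
Hypothesis r_unit : 0 <= r < 1.

Lemma geom_sum_ratio_cv g h : diverges g -> diverges h ->
  Un_cv (fun N => geom_sum r (g N) / geom_sum r (h N)) 1.
Proof.
  intros Hg Hh; replace 1 with (/ (1 - r) * / / (1 - r)) by (field; lra).
  apply CV_mult; [|apply Un_cv_inv; [|apply Rinv_neq_0_compat; lra]];
    apply Un_cv_comp_diverges; auto; apply geom_sum_cv, r_unit.
Qed.

Lemma inv_geom_sum_cv g : diverges g -> Un_cv (fun N => 1 / geom_sum r (g N)) (1 - r).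
Proof.
  intros Hg; replace (1 - r) with (1 * / / (1 - r)) by (field; lra).
  apply CV_mult; [apply Un_cv_const|apply Un_cv_inv; [|apply Rinv_neq_0_compat; lra]].
  apply Un_cv_comp_diverges; auto; apply geom_sum_cv, r_unit.
Qed.

End GeomSumLimits.

Lemma geom_sum_pow_le r m : 0 <= r <= 1 -> INR m * r ^ m <= geom_sum r m.
Proof.
  intros Hr; induction m as [|m IH]; [simpl; lra|]; cbn [geom_sum pow]; rewrite S_INR.
  pose proof (pow_le r m ltac:(lra)); pose proof (pos_INR m).
  assert (r * r ^ m <= r ^ m) by nra; nra.
Qed.

(* From [m r^m <= geom_sum r m] and [(1 - r) geom_sum r m = 1 - r^m]. *)
Lemma inv_geom_sum_le r m : 0 <= r <= 1 -> (1 <= m)%nat -> 1 / geom_sum r m <= 1 / INR m + (1 - r).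
Proof.
  intros Hr Hm; pose proof (geom_sum_ge1 r m ltac:(lra) Hm); pose proof (geom_sum_pow_le r m Hr).
  pose proof (geom_sum_closed_form r m); assert (Hm' : 1 <= INR m) by (apply (le_INR 1); lia).
  assert (r ^ m <= geom_sum r m / INR m).
  { apply (Rmult_le_reg_r (INR m)); [lra|]; unfold Rdiv; rewrite Rmult_assoc, Rinv_l by lra; lra. }
  apply (Rmult_le_reg_r (geom_sum r m)); [lra|].
  unfold Rdiv in *; rewrite Rmult_assoc, Rinv_l, Rmult_plus_distr_r by lra; lra.
Qed.

Lemma return_prob_gap p N y : 1 / 2 <= p < 1 -> (0 < y < N)%nat ->
  0 <= 1 - return_prob p N y <= 1 / INR (N - y) + 1 / INR y + 2 * (1 - odds p).
Proof.
  intros Hp Hy; assert (Hp' : 0 < p <= 1) by lra.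
  pose proof (odds_ge0 p Hp') as Hr0.
  assert (Hr1 : odds p <= 1).
  { unfold odds; apply (Rmult_le_reg_r p); [lra|]; unfold Rdiv; rewrite Rmult_assoc, Rinv_l; lra. }
  pose proof (return_prob_bounds p N y Hp' Hy).
  assert (Hsucc : 1 - hit_prob p N y (S y) <= 1 / INR (N - y) + (1 - odds p)).
  { rewrite hit_prob_succ by assumption; ring_simplify (1 - (1 - 1 / geom_sum (odds p) (N - y))).
    apply inv_geom_sum_le; [lra|lia]. }
  assert (Hpred : 1 - hit_prob p N y (Nat.pred y) <= 1 / INR y + (1 - odds p)).
  { rewrite one_sub_hit_prob_pred by assumption.
    pose proof (geom_sum_ge1 (odds p) y Hr0 ltac:(lia)).
    pose proof (pow_incr (odds p) 1 (Nat.pred y) ltac:(lra)); rewrite pow1 in *.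
    pose proof (inv_geom_sum_le (odds p) y ltac:(lra) ltac:(lia)).
    assert (odds p ^ Nat.pred y / geom_sum (odds p) y <= 1 / geom_sum (odds p) y); [|lra].
    unfold Rdiv; apply Rmult_le_compat_r; [left; apply Rinv_0_lt_compat|]; lra. }
  pose proof (hit_prob_succ_bounds p N y Hp' Hy); pose proof (hit_prob_pred_bounds p N y Hp' Hy).
  unfold return_prob in *; split; [lra|nra].
Qed.

Lemma escape_prob_gt0 p N y f : 0 < p < 1 -> (0 < y < N)%nat -> f N = true \/ f O = true ->
  0 < escape_prob p N y f.
Proof.
  intros Hp Hy Hf; assert (Hp' : 0 < p <= 1) by lra.
  pose proof (hit_prob_succ_bounds p N y Hp' Hy).
  assert (0 < 1 - hit_prob p N y (Nat.pred y)).
  { rewrite one_sub_hit_prob_pred by assumption.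
    pose proof (geom_sum_ge1 (odds p) y (odds_ge0 p Hp') ltac:(lia)).
    apply Rdiv_lt_0_compat; [apply pow_lt, odds_gt0|]; lra. }
  unfold escape_prob, indicator; destruct Hf as [-> | ->]; destruct (f _); nra.
Qed.

Definition nearly_symmetric (pN : nat -> R) : Prop :=
  exists K, eventually (fun N => 1 / 2 <= pN N < 1 /\ 1 - odds (pN N) <= K / INR N).

Lemma nearly_symmetric_half : nearly_symmetric (fun _ => / 2).
Proof.
  exists 0, O; intros N _; unfold odds; split; [lra|].
  replace ((1 - / 2) / / 2) with 1 by field; unfold Rdiv; lra.
Qed.

Lemma nearly_symmetric_weak c : 0 < c -> nearly_symmetric (fun N => / 2 + c / INR N).
Proof.
  intros Hc; exists (4 * c).
  eapply eventually_mono; [|exact (eventually_scaled_gt 1 (2 * c + 1) ltac:(lra))].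
  cbv beta; intros N HN; rewrite Rmult_1_l in HN.
  set (t := c / INR N).
  assert (Ht : 0 < t < / 2).
  { split; [apply Rdiv_lt_0_compat; lra|].
    apply (Rmult_lt_reg_r (INR N)); [lra|]; unfold t, Rdiv; rewrite Rmult_assoc, Rinv_l; lra. }
  split; [lra|]; replace (4 * c / INR N) with (4 * t) by (unfold t; field; lra).
  unfold odds; replace (1 - (1 - (/ 2 + t)) / (/ 2 + t)) with (2 * t / (/ 2 + t)) by (field; lra).
  apply (Rmult_le_reg_r (/ 2 + t)); [lra|]; unfold Rdiv; rewrite Rmult_assoc, Rinv_l by lra; nra.
Qed.

Lemma return_prob_cv_1 pN beta : nearly_symmetric pN -> 0 < beta < 1 ->
  Un_cv (fun N => return_prob (pN N) N (ipart (beta * INR N))) 1.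
Proof.
  intros [K HK] Hb.
  apply (Un_cv_dominated _ (fun N => 1 / INR (N - ipart (beta * INR N))
                                     + 1 / INR (ipart (beta * INR N)) + 2 * (K / INR N))).
  - eapply eventually_mono; [|exact (eventually_and _ _ HK (ipart_scaled_interior beta Hb))].
    cbv beta; intros N [[Hp HpK] Hy].
    pose proof (return_prob_gap (pN N) N _ Hp Hy).
    rewrite Rabs_left1 by lra; lra.
  - assert (Hid : diverges (fun N => N)) by (intros M; exists M; auto).
    replace 0 with (1 * 0 + 1 * 0 + 2 * (K * 0)) by ring; unfold Rdiv.
    repeat apply CV_plus; repeat apply CV_mult; try apply Un_cv_const; apply inv_INR_diverges_cv0.
    + apply ipart_scaled_compl_diverges, Hb.
    + apply ipart_scaled_diverges, Hb.
    + exact Hid.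
Qed.

Lemma CProb_odd_visits_cv pN alpha beta
  (E : nat -> nat -> list nat -> bool) (f : nat -> nat -> bool) :
  0 < alpha < 1 -> 0 < beta < 1 -> alpha <> beta -> nearly_symmetric pN ->
  (forall N x y s, (0 < x < N)%nat -> (0 < y < N)%nat -> x <> y -> absorbed N (run N x s) = true ->
     E N y (run N x s) = (0 <? G y (run N x s))%nat && f N (last (run N x s) O)) ->
  (forall N, f N N = true \/ f N O = true) ->
  Un_cv (fun N => CProb (pN N) N (ipart (alpha * INR N))
                    (fun w => Nat.odd (G (ipart (beta * INR N)) w))
                    (E N (ipart (beta * INR N)))) (/ 2).
Proof.
  intros Ha Hb Hab HpN HE Hf.
  apply (Un_cv_eventually_ext _ (fun N => 1 / (1 + return_prob (pN N) N (ipart (beta * INR N))))).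
  - destruct HpN as [K HK].
    pose proof (eventually_and _ _ (ipart_scaled_interior alpha Ha) (ipart_scaled_interior beta Hb))
      as Hinside.
    pose proof (eventually_and _ _ HK (ipart_scaled_neq alpha beta Ha Hb Hab)) as HpK.
    eapply eventually_mono; [|exact (eventually_and _ _ HpK Hinside)].
    cbv beta; intros N [[[Hp _] Hxy] [Hx Hy]].
    apply (CProb_odd_visits (pN N) N _ (f N)); [lra|assumption|lra|assumption| |].
    2: apply escape_prob_gt0; auto; lra.
    intros s Hs; apply HE; assumption.
  - replace (/ 2) with (1 * / (1 + 1)) by field; unfold Rdiv.
    apply CV_mult; [apply Un_cv_const|apply Un_cv_inv; [|lra]].
    apply CV_plus; [apply Un_cv_const|apply return_prob_cv_1; assumption].
Qed.

Lemma Prob_odd_visits_asymmetric_cv p alpha beta : 1 - p < p <= 1 ->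
  0 < alpha < 1 -> 0 < beta < 1 -> alpha < beta ->
  Un_cv (fun N => Prob p N (ipart (alpha * INR N)) (fun w => Nat.odd (G (ipart (beta * INR N)) w)))
        (1 / (2 - (p - (1 - p)))).
Proof.
  intros Hp Ha Hb Hab; assert (Hp' : 0 < p <= 1) by lra.
  set (r := odds p); assert (Hr : 0 <= r < 1).
  { split; [apply odds_ge0, Hp'|]; unfold r, odds.
    apply (Rmult_lt_reg_r p); [lra|]; unfold Rdiv; rewrite Rmult_assoc, Rinv_l; lra. }
  set (x N := ipart (alpha * INR N)); set (y N := ipart (beta * INR N)).
  apply (Un_cv_eventually_ext _ (fun N => geom_sum r (x N) / geom_sum r (y N)
           / (1 + (p * (1 - 1 / geom_sum r (N - y N))
                   + (1 - p) * (geom_sum r (Nat.pred (y N)) / geom_sum r (y N)))))).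
  - eapply eventually_mono; [|exact (eventually_and _ _ (ipart_scaled_lt alpha beta Ha Hb Hab)
                                                      (ipart_scaled_interior beta Hb))].
    cbv beta; intros N [Hxy Hy]; fold (x N) (y N) in Hxy, Hy |- *.
    rewrite Prob_odd_visits by (assumption || lia).
    unfold return_prob; rewrite hit_prob_succ, hit_prob_pred, hit_prob_below by (assumption || lia).
    reflexivity.
  - assert (Hx : diverges x) by (apply ipart_scaled_diverges; lra).
    assert (Hy : diverges y) by (apply ipart_scaled_diverges; lra).
    replace (1 / (2 - (p - (1 - p)))) with (1 * / (1 + (p * (1 - (1 - r)) + (1 - p) * 1)))
      by (unfold r, odds; field; lra).
    unfold Rdiv at 1; apply CV_mult; [apply geom_sum_ratio_cv; assumption|].
    apply Un_cv_inv; [|nra].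
    apply CV_plus; [apply Un_cv_const|apply CV_plus; apply CV_mult; try apply Un_cv_const].
    + apply CV_minus; [apply Un_cv_const|apply inv_geom_sum_cv; [assumption|]].
      apply ipart_scaled_compl_diverges; lra.
    + apply geom_sum_ratio_cv; [assumption|apply diverges_pred|]; assumption.
Qed.

Theorem proposition4p3 (alpha beta : R) :
  0 < alpha < 1 -> 0 < beta < 1 -> alpha <> beta ->
  (* (i) symmetric or weakly asymmetric walk *)
  (forall pN : nat -> R,
      (pN = (fun _ => / 2) \/
       exists c : R, 0 < c /\ pN = (fun N => / 2 + c / INR N)) ->
      Un_cv (fun N =>
        let x := ipart (alpha * INR N) in let y := ipart (beta * INR N) in
        CProb (pN N) N x (fun w => Nat.odd (G y w))
              (fun w => ltT (T y w) (T N w) && ltT (T N w) (T 0 w))) (/ 2)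
   /\ Un_cv (fun N =>
        let x := ipart (alpha * INR N) in let y := ipart (beta * INR N) in
        CProb (pN N) N x (fun w => Nat.odd (G y w))
              (fun w => ltT (T y w) (T 0 w) && ltT (T 0 w) (T N w))) (/ 2)
   /\ Un_cv (fun N =>
        let x := ipart (alpha * INR N) in let y := ipart (beta * INR N) in
        CProb (pN N) N x (fun w => Nat.odd (G y w))
              (fun w => ltT (T y w) (minT (T 0 w) (T N w)))) (/ 2))
  /\
  (* (ii) asymmetric walk, fixed q = 1 - p < p, alpha < beta *)
  (forall p : R, 0 <= 1 - p -> 1 - p < p -> alpha < beta ->
      Un_cv (fun N =>
        let x := ipart (alpha * INR N) in let y := ipart (beta * INR N) in
        Prob p N x (fun w => Nat.odd (G y w))) (1 / (2 - (p - (1 - p))))).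
Proof.
  intros Ha Hb Hab; split.
  - intros pN HpN.
    assert (Hsym : nearly_symmetric pN)
      by (destruct HpN as [->|[c [Hc ->]]];
          [apply nearly_symmetric_half|apply nearly_symmetric_weak, Hc]).
    split; [|split].
    + apply (CProb_odd_visits_cv pN alpha beta
               (fun N y w => ltT (T y w) (T N w) && ltT (T N w) (T 0 w)) (fun N z => z =? N)%nat
               Ha Hb Hab Hsym).
      * intros N x y s Hx Hy Hxy Hs; apply (exit_order_events N x y s Hx Hy Hxy Hs).
      * intros N; left; apply Nat.eqb_refl.
    + apply (CProb_odd_visits_cv pN alpha beta
               (fun N y w => ltT (T y w) (T 0 w) && ltT (T 0 w) (T N w)) (fun N z => z =? 0)%nat
               Ha Hb Hab Hsym).
      * intros N x y s Hx Hy Hxy Hs; apply (exit_order_events N x y s Hx Hy Hxy Hs).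
      * intros N; right; reflexivity.
    + apply (CProb_odd_visits_cv pN alpha beta
               (fun N y w => ltT (T y w) (minT (T 0 w) (T N w))) (fun _ _ => true) Ha Hb Hab Hsym).
      * intros N x y s Hx Hy Hxy Hs; rewrite andb_true_r.
        apply (exit_order_events N x y s Hx Hy Hxy Hs).
      * intros N; left; reflexivity.
  - intros p Hq Hpq Hab'; apply Prob_odd_visits_asymmetric_cv; lra.
Qed.
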